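(* For integers $n,k$, let $A(n,k)$ be the number of partitions $\lambda\in\mathcal{H}_n$ with $\mathrm{rep}(\lambda)=k$ (so $A(n,k)=0$ if $k<0$ or $n\le 0$). Then $A(1,0)=1$ and for all $n\ge 2$ and all integers $k$, $$A(n,k)=A(n-1,k)+A(n-1,k-1)+A(n-2,k)-A(n-2,k-1).$$
   Context: A partition is a finite nonempty weakly decreasing sequence $\lambda=(\lambda_1,\ldots,\lambda_k)$ of positive integers; $\ell(\lambda)=k$ is its number of parts. The perimeter is $\Gamma(\lambda)=\lambda_1+\ell(\lambda)-1$; $\mathcal{H}_n$ is the set of partitions with perimeter $n$ (empty for $n\le 0$). $\mathrm{rep}(\lambda)=|\{1\le i\le \ell(\lambda)-1:\lambda_i=\lambda_{i+1}\}|$. *)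

From mathcomp Require Import all_boot all_order all_algebra.
Set Implicit Arguments. Unset Strict Implicit. Unset Printing Implicit Defensive.
Import Order.TTheory GRing.Theory Num.Theory.

Definition is_partition (s : seq nat) : bool :=
  [&& s != [::], all (fun x => 0 < x) s & sorted geq s].

Definition nparts (s : seq nat) : nat := size s.

Definition perimeter (s : seq nat) : int :=
  (Posz (head 0 s) + Posz (nparts s) - 1)%R.

Definition rep (s : seq nat) : nat :=
  count (fun i => nth 0 s i == nth 0 s i.+1) (iota 0 (size s).-1).

Fixpoint seqs_upto (b m : nat) : seq (seq nat) :=
  match m with
  | 0 => [:: [::]]
  | m'.+1 => [::] :: [seq x :: s | x <- iota 0 b.+1, s <- seqs_upto b m']
  end.

(* A(n,k) = #{ lambda in H_n : rep(lambda) = k }.  Every lambda in H_n has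
   length <= n and parts <= n, so it suffices to search seqs_upto |n| |n|. *)
Definition A (n k : int) : nat :=
  count (fun s => [&& is_partition s, perimeter s == n & Posz (rep s) == k])
        (seqs_upto `|n|%N `|n|%N).

From mathcomp Require Import all_boot all_order all_algebra zify.
Import Order.TTheory GRing.Theory Num.Theory.

(* Removing the largest part of a partition of perimeter n with at least two
   parts leaves a partition mu of perimeter m < n, and the removed part is
   head mu + (n - 1 - m); besides these, H_n contains only the one-part
   partition (n).  The removed part repeats head mu exactly when m = n - 1, so
   A(n,k) = [k = 0] + sum_(m < n-1) A(m,k) + A(n-1,k-1), and subtracting this
   identity at n - 1 from the one at n yields the recurrence. *)

Lemma mem_seqs_upto b m s :
  (s \in seqs_upto b m) = (size s <= m) && all (leq^~ b) s.
Proof.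
elim: m s => [|m IHm] [|x s] //; rewrite in_cons [_ == _]/=.
apply/allpairsP/idP => [[[y t] [y_b t_m [-> ->]]] | /andP [s_m /andP [x_b s_b]]].
  move: y_b t_m; rewrite mem_iota IHm /= add0n ltnS => y_b /andP [t_m t_b].
  exact/and3P.
exists (x, s); split => //; first by rewrite mem_iota add0n ltnS x_b.
by rewrite IHm; apply/andP.
Qed.

Lemma seqs_upto_uniq b m : uniq (seqs_upto b m).
Proof.
elim: m => // m IHm; rewrite cons_uniq; apply/andP; split.
  by apply/negP => /allpairsP [[x t] []].
by apply: allpairs_uniq => [||[x s] [y t] _ _ [-> ->]]; rewrite ?iota_uniq.
Qed.

Lemma perimeter_cons x s : perimeter (x :: s) = Posz (x + size s).
Proof. by rewrite /perimeter /nparts /=; lia. Qed.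

Lemma is_partition_cons2 x y s :
  is_partition [:: x, y & s] = (y <= x) && is_partition (y :: s).
Proof.
rewrite /is_partition /=; apply/idP/idP.
  by case/and3P => /and3P [_ -> ->] -> ->.
by case/and3P => yx /andP [y_gt0 ->] ->; rewrite (leq_trans y_gt0 yx) y_gt0 yx.
Qed.

Lemma rep_cons2 x y s : rep [:: x, y & s] = ((x == y) + rep (y :: s))%N.
Proof. by rewrite /rep /= (iotaDl 1 0) count_map. Qed.

Definition perimeter_partitions (n : nat) : seq (seq nat) :=
  [seq s <- seqs_upto n n | is_partition s && (perimeter s == Posz n)].

Lemma mem_perimeter_partitions n s :
  (s \in perimeter_partitions n) = is_partition s && (perimeter s == Posz n).
Proof.
rewrite mem_filter andb_idr // => /andP [].
case: s => // x s /and3P [_ /andP [x_gt0 _] s_sorted].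
rewrite perimeter_cons eqz_nat => /eqP <-; rewrite mem_seqs_upto /= leq_addr.
have /allP s_le_x := order_path_min (rev_trans leq_trans) s_sorted.
apply/andP; split; first by rewrite -add1n leq_add2r.
by apply/allP => y /s_le_x /leq_trans; apply; rewrite leq_addr.
Qed.

Lemma perimeter_partitions_uniq n : uniq (perimeter_partitions n).
Proof. exact/filter_uniq/seqs_upto_uniq. Qed.

Lemma A_count (n : nat) k :
  A n k = count (fun s => Posz (rep s) == k) (perimeter_partitions n).
Proof.
by rewrite /A count_filter; apply: eq_count => s /=; rewrite andbA andbC.
Qed.

Definition add_part (n m : nat) (mu : seq nat) : seq nat :=
  (head 0 mu + (n.-1 - m)) :: mu.

Lemma add_part_perimeter n m mu : m < n ->
  mu \in perimeter_partitions m -> add_part n m mu \in perimeter_partitions n.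
Proof.
rewrite !mem_perimeter_partitions; case: mu => // y s m_lt_n /andP [mu_part].
rewrite /add_part is_partition_cons2 !perimeter_cons /= !eqz_nat leq_addr mu_part.
by move=> /eqP m_def; apply/eqP; lia.
Qed.

Lemma perimeter_partition_behead n x y s :
    [:: x, y & s] \in perimeter_partitions n ->
  [/\ y + size s < n, y :: s \in perimeter_partitions (y + size s)
    & [:: x, y & s] = add_part n (y + size s) (y :: s)].
Proof.
rewrite [_ \in _]mem_perimeter_partitions is_partition_cons2 perimeter_cons eqz_nat.
case/andP => /andP [y_le_x ys_part] /eqP /= n_def; split.
- lia.
- by rewrite mem_perimeter_partitions ys_part perimeter_cons eqxx.
- by rewrite /add_part /=; congr (_ :: _); lia.
Qed.

Lemma perimeter_partitions_rec n : 0 < n ->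
  perm_eq (perimeter_partitions n)
    ([:: n] :: [seq add_part n m mu | m <- iota 0 n, mu <- perimeter_partitions m]).
Proof.
move=> n_gt0; set parts := [seq add_part _ _ _ | _ <- _, _ <- _].
have single_notin x : [:: x] \notin parts.
  apply/negP => /allpairsPdep [m [mu [_ mu_in /(congr1 behead) /= mu_nil]]].
  by move: mu_in; rewrite -mu_nil mem_perimeter_partitions.
apply: uniq_perm; rewrite ?cons_uniq ?single_notin ?perimeter_partitions_uniq //.
- apply: allpairs_uniq_dep => [|m _|]; rewrite ?iota_uniq ?perimeter_partitions_uniq //.
  move=> _ _ /allpairsPdep [m1 [mu1 [_ + ->]]] /allpairsPdep [m2 [mu2 [_ + ->]]].
  move=> + + /(congr1 behead) /= mu12; rewrite -{}mu12 !mem_perimeter_partitions.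
  by move=> /andP [_ /eqP ->] /andP [_ /eqP [->]].
- move=> [|x [|y s]]; rewrite in_cons.
  + by rewrite mem_perimeter_partitions; apply/esym/allpairsPdep => -[m [mu []]].
  + rewrite (negbTE (single_notin x)) mem_perimeter_partitions perimeter_cons eqz_nat.
    rewrite addn0 eqseq_cons /is_partition /= !andbT orbF.
    by apply/andP/eqP => [[_ /eqP] | ->].
  + rewrite /parts eqseq_cons andbF /=; apply/idP/idP.
      case/perimeter_partition_behead => m_lt_n ys_in ->; apply/allpairsPdep.
      by exists (y + size s), (y :: s); rewrite mem_iota.
    case/allpairsPdep => m [mu [+ mu_in ->]]; rewrite mem_iota => m_lt_n.
    exact: add_part_perimeter.
Qed.

Lemma rep_add_part n m mu :
  mu != [::] -> rep (add_part n m mu) = ((n.-1 <= m) + rep mu)%N.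
Proof.
case: mu => // y s _; rewrite /add_part rep_cons2 /=.
by rewrite -[X in _ == X]addn0 eqn_add2l subn_eq0.
Qed.

Lemma count_rep_add_part n m k :
    count (fun s => Posz (rep s) == k)
          [seq add_part n m mu | mu <- perimeter_partitions m]
  = A m (if n.-1 <= m then (k - 1)%R else k).
Proof.
rewrite A_count count_map; apply: eq_in_count => mu.
rewrite mem_perimeter_partitions => /andP [/and3P [mu_nonempty _ _] _].
rewrite /preim /= rep_add_part //; case: ifP => _ //=.
by apply/eqP/eqP; lia.
Qed.

Lemma A_rec (n : nat) k :
  A n.+1 k = ((k == 0) + \sum_(0 <= m < n) A m k + A n (k - 1)%R)%N.
Proof.
rewrite A_count (permP (perimeter_partitions_rec _ (ltn0Sn n))) -cat1s count_cat.
rewrite count_flatten -map_comp sumnE big_map -[iota _ _]/(index_iota 0 n.+1).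
rewrite big_nat_recr //= count_rep_add_part leqnn addn0 addnA eq_sym.
congr (_ + _ + _)%N; apply: eq_big_nat => m /andP [_ m_lt_n].
by rewrite /= count_rep_add_part leqNgt m_lt_n.
Qed.

Local Open Scope ring_scope.

Theorem lemma2p1 :
  A 1 0 = 1%N /\
  (forall n k : int, 2 <= n ->
     (A n k)%:Z = (A (n - 1) k)%:Z + (A (n - 1) (k - 1))%:Z
                  + (A (n - 2) k)%:Z - (A (n - 2) (k - 1))%:Z).
Proof.
split; first by rewrite (A_rec 0) big_geq.
case=> [[|[|n]] | //] k // _.
have -> : n.+2%:Z - 1 = n.+1 by lia.
have -> : n.+2%:Z - 2 = n by lia.
by rewrite (A_rec n.+1 k) (A_rec n k) big_nat_recr //=; lia.
Qed.
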